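(* Let $\Delta$ be a finite, flag, simply connected simplicial complex, and let $H_\Delta$, $q$, $T$, $p_n$, $p$ and $\theta$ be as described in the context. For all $e\in\mathrm{Edge}(\Delta)$ and $n\in\mathbb{Z}$ the following equalities hold in $H_\Delta$: (i) $\theta(e)=p(q,\iota e)\,e\,p(q,\iota e)^{-1}=p(q,\iota e)\,e^2\,p(\tau e,q)=p(q,\iota e)\,e^2\,p(q,\tau e)^{-1}$; (ii) $\theta(e^n)=p(q,\iota e)\,e^n\,p(\iota e,q)=p(q,\iota e)\,e^{n+1}\,p(\tau e,q)=p(q,\iota e)\,e^{n+1}\,p(q,\tau e)^{-1}$; (iii) if $e_1\cdot\ldots\cdot e_l$ is a combinatorial path then $\theta(e_1^n\cdots e_l^n)=p(q,\iota e_1)\,e_1^{n+1}\cdots e_l^{n+1}\,p(\tau e_l,q)$; (iv) $\theta^{-1}(e)=p_{-1}(q,\iota e)\,p_{-1}(\tau e,q)=p_{-1}(q,\iota e)\,e\,p_{-1}(\iota e,q)=p_{-1}(q,\iota e)\,e\,p_{-1}(q,\iota e)^{-1}$; (v) $\theta^{-1}(e^n)=p_{-1}(q,\iota e)\,e^n\,p_{-1}(\iota e,q)=p_{-1}(q,\iota e)\,e^{n-1}\,p_{-1}(\tau e,q)=p_{-1}(q,\iota e)\,e^{n-1}\,p_{-1}(q,\tau e)^{-1}$; (vi) if $e_1\cdot\ldots\cdot e_l$ is a combinatorial path then $\theta^{-1}(e_1^n\cdots e_l^n)=p_{-1}(q,\iota e_1)\,e_1^{n-1}\cdots e_l^{n-1}\,p_{-1}(\tau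 e_l,q)$; (vii) for all $k\in\mathbb{Z}$, $\theta^k(e)=p_k(q,\iota e)\,e^{k+1}\,p_k(\tau e,q)$.
   Context: $\mathrm{Edge}(\Delta)$ is the set of directed edges of $\Delta$ (each 1-simplex gives two); for $e\in\mathrm{Edge}(\Delta)$, $\iota e$ and $\tau e$ are its initial and terminal vertices and $\overline{e}$ is $e$ with reversed orientation. Directed edges $e_1,\dots,e_l$ form a combinatorial path $e_1\cdot\ldots\cdot e_l$ if $\tau e_i=\iota e_{i+1}$ for all $i$, and a combinatorial 1-cycle if moreover $\tau e_l=\iota e_1$. The Bestvina–Brady group $H_\Delta$ (kernel of the map from the right-angled Artin group of $\Delta$ to $\mathbb{Z}$ sending every standard generator to a fixed generator) is presented by $\mathcal{P}_H=\langle \mathrm{Edge}(\Delta)\mid \mathcal{R}_H\rangle$, where $\mathcal{R}_H$ consists of the words $e\overline{e}$ for $e\in\mathrm{Edge}(\Delta)$ and the words $efg$ and $e^{-1}f^{-1}g^{-1}$ for every combinatorial 1-cycle $e\cdot f\cdot g$. Fix a vertex $q$ and a spanning tree $T$ of the 1-skeleton of $\Delta$. For $n\in\mathbb{Z}$ and vertices $u,v$, $p_n(u,v)$ denotes $e_1^n\cdots e_l^n$ where $e_1\cdot\ldots\cdot e_l$ is the unique geodesic combinatorial path in $T$ from $u$ to $v$, and $p(u,v)=p_1(u,v)$. For $e\in\mathrm{Edge}(\Delta)$ let $w_e=p(q,\iota e)\,e\,p(\iota e,q)$; it is known that $e\mapsto w_e$ defines an automorphism $\theta$ of $H_\Delta$.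 *)

From mathcomp Require Import all_boot all_order all_algebra.
Set Implicit Arguments. Unset Strict Implicit. Unset Printing Implicit Defensive.
Import GRing.Theory.

(* A finite flag simplicial complex Delta is determined by its 1-skeleton:
   a simple graph (symmetric, irreflexive [adj]) on a finite vertex type V;
   its simplices are the cliques.  Only the 2-skeleton (triangles) matters below. *)

Section BestvinaBrady.
Variables (V : finType) (adj : rel V).

(* directed edges: pairs (iota e, tau e); reversal of e = (e.2, e.1) *)
Definition dedge := (V * V)%type.
(* a letter is a generator (false, e) or its formal inverse (true, e) *)
Definition letter := (bool * dedge)%type.
Definition word := seq letter.

Definition linv (x : letter) : letter := (~~ x.1, x.2).
Definition winv (w : word) : word := rev (map linv w).
Definition gen (e : dedge) : word := [:: (false, e)].
Definition epow (e : dedge) (n : int) : word :=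
  match n with
  | Posz m => nseq m (false, e)
  | Negz m => nseq m.+1 (true, e)
  end.

Definition relator (r : word) : Prop :=
  (exists u v, adj u v /\ r = [:: (false, (u, v)); (false, (v, u))]) \/
  (exists a b c, [/\ adj a b, adj b c & adj c a] /\
     (r = [:: (false, (a, b)); (false, (b, c)); (false, (c, a))] \/
      r = [:: (true, (a, b)); (true, (b, c)); (true, (c, a))])).

(* Equality in the group presented by <Edge | R_H>: the congruence on words
   generated by free cancellation and by the relators. *)
Inductive heq : word -> word -> Prop :=
| heq_refl w : heq w w
| heq_sym w1 w2 : heq w1 w2 -> heq w2 w1
| heq_trans w1 w2 w3 : heq w1 w2 -> heq w2 w3 -> heq w1 w3
| heq_free w1 w2 x : heq (w1 ++ x :: linv x :: w2) (w1 ++ w2)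
| heq_rel w1 w2 r : relator r -> heq (w1 ++ r ++ w2) (w1 ++ w2).

(* Combinatorial homotopy of edge paths (vertex sequences) in the 2-skeleton *)
Inductive ehom : seq V -> seq V -> Prop :=
| eh_refl s : ehom s s
| eh_sym s1 s2 : ehom s1 s2 -> ehom s2 s1
| eh_trans s1 s2 s3 : ehom s1 s2 -> ehom s2 s3 -> ehom s1 s3
| eh_back s1 s2 a b : adj a b ->
    ehom (s1 ++ [:: a; b; a] ++ s2) (s1 ++ a :: s2)
| eh_tri s1 s2 a b c : adj a b -> adj b c -> adj a c ->
    ehom (s1 ++ [:: a; b; c] ++ s2) (s1 ++ [:: a; c] ++ s2).

Definition simply_connected : Prop :=
  (forall u v, connect adj u v) /\
  (forall x s, path adj x s -> last x s = x -> ehom (x :: s) [:: x]).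

Definition spanning_tree (t : rel V) : Prop :=
  [/\ symmetric t, subrel t adj, (forall u v, connect t u v) &
      (forall u s1 s2, path t u s1 -> path t u s2 -> uniq (u :: s1) ->
         uniq (u :: s2) -> last u s1 = last u s2 -> s1 = s2)].

(* tp u v is the vertex list (after u) of the unique geodesic path in t from u to v *)
Definition tree_path_fun (t : rel V) (tp : V -> V -> seq V) : Prop :=
  forall u v, [/\ path t u (tp u v), last u (tp u v) = v & uniq (u :: tp u v)].

Definition vedges (u : V) (s : seq V) : seq dedge := zip (u :: s) s.

Definition powpath (es : seq dedge) (n : int) : word :=
  flatten [seq epow f n | f <- es].

Definition pn (tp : V -> V -> seq V) (n : int) (u v : V) : word :=
  powpath (vedges u (tp u v)) n.

Definition w_e (tp : V -> V -> seq V) (q : V) (e : dedge) : word :=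
  pn tp 1 q e.1 ++ gen e ++ pn tp 1 e.1 q.

Definition theta (tp : V -> V -> seq V) (q : V) (w : word) : word :=
  flatten [seq (if x.1 then winv (w_e tp q x.2) else w_e tp q x.2) | x <- w].

(* "theta^k (x) = y" in H_Delta, for k : int.  For k < 0 this uses that
   theta is an automorphism: theta^k(x) = y  iff  theta^(-k)(y) = x. *)
Definition theta_pow_eq (tp : V -> V -> seq V) (q : V) (k : int) (x y : word) : Prop :=
  match k with
  | Posz m => heq (iter m (theta tp q) x) y
  | Negz m => heq (iter m.+1 (theta tp q) y) x
  end.

End BestvinaBrady.

From Stdlib Require Import Setoid Morphisms.
From mathcomp Require Import all_boot all_order all_algebra zify.
Import GRing.Theory.
Local Open Scope ring_scope.

(* Write g u = p(q,u) and h u = p(u,q).  Simple connectivity makes the word of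
   every closed edge path trivial, so g u h u = 1 and h u g v = e for every
   edge e = (u,v): the tree paths are inverse to each other and "absorb" an edge.
   Hence theta(e) = g u e h u is conjugation of e by g u, and for a path
   e_1 ... e_l the middle factors h(iota e_i) g(iota e_(i+1)) collapse to e_i,
   raising every exponent by one.  The same identities show that theta kills
   the relators, so it is well defined on H_Delta, and iterating the formula
   for theta(e) gives theta^k(e); the statements for theta^-1 follow by
   applying theta to the claimed preimages. *)

Section BestvinaBradyTheta.
Local Set Implicit Arguments. Local Unset Strict Implicit.
Variables (V : finType) (adj : rel V).
Local Notation H := (heq adj).
Local Hint Resolve heq_refl : core.

Lemma heq_in_ctx a b c d : H a b -> H (c ++ a ++ d) (c ++ b ++ d).
Proof.
elim=> {a b} [w|w1 w2 _ IH|w1 w2 w3 _ IH1 _ IH2|w1 w2 x|w1 w2 r Hr].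
- exact: heq_refl.
- exact: heq_sym.
- exact: heq_trans IH1 IH2.
- by have := heq_free adj (c ++ w1) (w2 ++ d) x; rewrite -!catA.
- by have := heq_rel (c ++ w1) (w2 ++ d) Hr; rewrite -!catA.
Qed.

Local Instance heq_equiv : Equivalence H.
Proof. split; [exact: heq_refl | exact: heq_sym | exact: heq_trans]. Qed.

Local Instance cat_heq_morph : Proper (H ==> H ==> H) (@cat (letter V)).
Proof.
move=> a a' Ha b b' Hb; transitivity (a' ++ b).
- exact: (heq_in_ctx [::] b Ha).
- by have := heq_in_ctx a' [::] Hb; rewrite !cats0.
Qed.

Local Instance cons_heq_morph x : Proper (H ==> H) (cons x).
Proof. by move=> a b Hab; have := heq_in_ctx [:: x] [::] Hab; rewrite !cats0. Qed.

Lemma linvK : involutive (@linv V).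
Proof. by case=> [[] ?]. Qed.

Lemma winvK : involutive (@winv V).
Proof. by move=> w; rewrite /winv map_rev revK -map_comp (eq_map linvK) map_id. Qed.

Lemma winv_cat (a b : word V) : winv (a ++ b) = winv b ++ winv a.
Proof. by rewrite /winv map_cat rev_cat. Qed.

Lemma winv_cons (x : letter V) (w : word V) : winv (x :: w) = winv w ++ [:: linv x].
Proof. by rewrite /winv /= rev_cons cats1. Qed.

Lemma heq_cancel (x : letter V) r : H (x :: linv x :: r) r.
Proof. exact: (heq_free adj [::] r x). Qed.

Lemma heq_mulKVg w r : H (w ++ winv w ++ r) r.
Proof.
elim: w r => [|x w IH] r; first exact: heq_refl.
by rewrite winv_cons -catA cat_cons IH; apply: heq_cancel.
Qed.

Lemma heq_mulKg w r : H (winv w ++ w ++ r) r.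
Proof. by have := heq_mulKVg (winv w) r; rewrite winvK. Qed.

Lemma heq_mulgV w : H (w ++ winv w) [::].
Proof. by have := heq_mulKVg w [::]; rewrite cats0. Qed.

Lemma heq_invg_unique a b : H (a ++ b) [::] -> H b (winv a).
Proof. by move=> Hab; rewrite -(heq_mulKg a b) Hab cats0. Qed.

Local Instance winv_heq_morph : Proper (H ==> H) (@winv V).
Proof.
move=> a b Hab; symmetry; apply: heq_invg_unique.
by rewrite Hab heq_mulgV.
Qed.

Lemma epow_rcons e n r : H (epow e n ++ (false, e) :: r) (epow e (n + 1) ++ r).
Proof.
have nseq_rcons x m s : nseq m x ++ x :: s = x :: nseq m x ++ s.
  by elim: m => //= m ->.
case: n => m.
- have -> : Posz m + 1 = Posz m.+1 by lia.
  by rewrite /epow nseq_rcons.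
- rewrite /epow cat_cons -nseq_rcons (heq_cancel (true, e)).
  case: m => [|m] //.
  by have -> : Negz m.+1 + 1 = Negz m by rewrite !NegzE; lia.
Qed.

Lemma heq_relator r w : relator adj r -> H (r ++ w) w.
Proof. exact: (heq_rel [::] w). Qed.

Lemma heq_back u v r : adj u v -> H ((false, (u, v)) :: (false, (v, u)) :: r) r.
Proof. by move=> uv; apply: (@heq_relator [:: _; _]); left; exists u, v. Qed.

Lemma heq_reverse_edge u v : adj u v -> H [:: (true, (v, u))] [:: (false, (u, v))].
Proof.
move=> uv; rewrite -[[:: (false, _)]]winvK -[[:: (true, _)]]/(winv [:: (false, (v, u))]).
by apply: winv_heq_morph; apply: heq_invg_unique; apply: heq_back.
Qed.

(* The three edges of a triangle commute, so (ab)^2 (bc)^2 (ca)^2 = (ab bc ca)^2 = 1. *)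
Lemma heq_triangle_squares a b c r : adj a b -> adj b c -> adj c a ->
  H [:: (false, (a, b)), (false, (a, b)), (false, (b, c)), (false, (b, c)),
        (false, (c, a)), (false, (c, a)) & r] r.
Proof.
move=> ab bc ca.
set x := (false, (a, b)); set y := (false, (b, c)); set z := (false, (c, a)).
have xyz w : H [:: x, y, z & w] w.
  by apply: (@heq_relator [:: _; _; _]); right; exists a, b, c; split; [split | left].
have xyz_inv w : H [:: linv x, linv y, linv z & w] w.
  by apply: (@heq_relator [:: _; _; _]); right; exists a, b, c; split; [split | right].
have xy_comm w : H [:: x, y & w] [:: y, x & w].
  transitivity (linv z :: w); first by rewrite -{1}(heq_cancel z w) xyz.
  symmetry; transitivity [:: y, x, linv x, linv y, linv z & w].
    by rewrite xyz_inv.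
  by rewrite !heq_cancel.
by rewrite /= (xy_comm [:: y, z, z & r]) !xyz.
Qed.

Hypothesis adj_sym : symmetric adj.

Lemma heq_triangle a b c r : adj a b -> adj b c -> adj a c ->
  H ((false, (a, b)) :: (false, (b, c)) :: r) ((false, (a, c)) :: r).
Proof.
move=> ab bc ac; have ca : adj c a by rewrite adj_sym.
transitivity ([:: (false, (a, b)); (false, (b, c)); (false, (c, a))] ++ (false, (a, c)) :: r).
  by rewrite /= (heq_back r ca).
by apply: heq_relator; right; exists a, b, c; split; [split | left].
Qed.

Fixpoint path_word (s : seq V) : word V :=
  if s is x :: ((y :: _) as s') then (false, (x, y)) :: path_word s' else [::].

Lemma path_word_cat s1 x s2 :
  path_word (s1 ++ x :: s2) = path_word (rcons s1 x) ++ path_word (x :: s2).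
Proof. by elim: s1 => [|y [|z s1] IH] //=; move: IH => /= ->. Qed.

Lemma path_word_catl x s1 s2 :
  path_word (x :: s1 ++ s2) = path_word (x :: s1) ++ path_word (last x s1 :: s2).
Proof.
elim: s1 x => [|y s1 IH] x //.
rewrite cat_cons.
change (path_word (x :: y :: (s1 ++ s2))) with ((false, (x, y)) :: path_word (y :: s1 ++ s2)).
by rewrite IH.
Qed.

Lemma powpath_vedges1 x s : powpath (vedges x s) 1 = path_word (x :: s).
Proof.
elim: s x => [|y s IH] x //.
by change (path_word (x :: y :: s)) with ((false, (x, y)) :: path_word (y :: s)); rewrite -IH.
Qed.

Lemma path_word_ehom s1 s2 : ehom adj s1 s2 -> H (path_word s1) (path_word s2).
Proof.
elim=> {s1 s2} [s|s1 s2 _ IH|s1 s2 s3 _ IH1 _ IH2|s1 s2 a b ab|s1 s2 a b c ab bc ac].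
- by [].
- by symmetry.
- by rewrite IH1.
- by rewrite /= !path_word_cat /= (heq_back _ ab).
- by rewrite /= !path_word_cat /= (heq_triangle _ ab bc ac).
Qed.

Hypothesis path_loops :
  forall x s, path adj x s -> last x s = x -> ehom adj (x :: s) [:: x].

Lemma path_word_loop x s : path adj x s -> last x s = x -> H (path_word (x :: s)) [::].
Proof. move=> xs_path xs_last; exact: path_word_ehom (path_loops xs_path xs_last). Qed.

Variables (t : rel V) (tp : V -> V -> seq V).
Hypotheses (t_sub : subrel t adj) (tpP : tree_path_fun t tp).

Lemma tp_path x y : path adj x (tp x y).
Proof. by case: (tpP x y) => xy_path _ _; apply: sub_path xy_path. Qed.

Lemma tp_last x y : last x (tp x y) = y.
Proof. by case: (tpP x y). Qed.

(* [x :: tp x x] is duplicate-free, so the path cannot return to x. *)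
Lemma tp_refl x : tp x x = [::].
Proof.
case: (tpP x x) => _; case: (tp x x) => [|y s] //= xx_last.
by rewrite -[in x \notin _]xx_last mem_last.
Qed.

Lemma pn_refl k x : pn tp k x x = [::].
Proof. by rewrite /pn tp_refl. Qed.

Lemma pn1_cat u w v : pn tp 1 u w ++ pn tp 1 w v = path_word (u :: tp u w ++ tp w v).
Proof. by rewrite /pn !powpath_vedges1 path_word_catl tp_last. Qed.

Lemma pn1_loop u w : H (pn tp 1 u w ++ pn tp 1 w u) [::].
Proof.
rewrite pn1_cat; apply: path_word_loop.
- by rewrite cat_path tp_path tp_last tp_path.
- by rewrite last_cat !tp_last.
Qed.

Lemma pn1_loopK u w r : H (pn tp 1 u w ++ pn tp 1 w u ++ r) r.
Proof. by rewrite catA pn1_loop. Qed.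

Lemma pn1_winv u w : H (pn tp 1 w u) (winv (pn tp 1 u w)).
Proof. exact/heq_invg_unique/pn1_loop. Qed.

Lemma pn1_edge u w v : adj u v -> H (pn tp 1 u w ++ pn tp 1 w v) [:: (false, (u, v))].
Proof.
move=> uv.
have uwvu_loop : H ((pn tp 1 u w ++ pn tp 1 w v) ++ [:: (false, (v, u))]) [::].
  have -> : (pn tp 1 u w ++ pn tp 1 w v) ++ [:: (false, (v, u))] =
            path_word (u :: (tp u w ++ tp w v) ++ [:: u]).
    by rewrite path_word_catl pn1_cat last_cat !tp_last.
  apply: path_word_loop; last by rewrite last_cat.
  by rewrite !cat_path last_cat !tp_last !tp_path /= adj_sym uv.
have := winv_heq_morph (heq_invg_unique uwvu_loop); rewrite winvK => <-.
exact: heq_reverse_edge.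
Qed.

Lemma pn1_edgeK u w v r : adj u v ->
  H (pn tp 1 u w ++ pn tp 1 w v ++ r) ((false, (u, v)) :: r).
Proof. by move=> uv; rewrite catA (pn1_edge _ uv). Qed.

Lemma pn1_step u v w : adj u v -> H (pn tp 1 u w) ((false, (u, v)) :: pn tp 1 v w).
Proof.
move=> uv; symmetry.
by rewrite -(pn1_edgeK w (pn tp 1 v w) uv) pn1_loop cats0.
Qed.

Variable q : V.
Local Notation th := (theta tp q).
Local Notation g u := (pn tp 1 q u).
Local Notation h u := (pn tp 1 u q).

Lemma theta_cat a b : th (a ++ b) = th a ++ th b.
Proof. by rewrite /theta map_cat flatten_cat. Qed.

Lemma theta_cons x w : th (x :: w) = th [:: x] ++ th w.
Proof. by rewrite -theta_cat. Qed.

Lemma theta_letterE x : th [:: x] = if x.1 then winv (w_e tp q x.2) else w_e tp q x.2.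
Proof. by rewrite /theta /= cats0. Qed.

Lemma theta_winv w : th (winv w) = winv (th w).
Proof.
elim: w => [|x w IH] //.
rewrite winv_cons theta_cat IH (theta_cons x w) winv_cat.
by case: x => [[] e]; rewrite !theta_letterE //= winvK.
Qed.

Lemma theta_letter x : H (th [:: x]) (g x.2.1 ++ x :: h x.2.1).
Proof.
rewrite theta_letterE /w_e; case: x => [[] e] //=.
by rewrite !winv_cat winv_cons -catA -pn1_winv -(pn1_winv q).
Qed.

Lemma theta_nseq k x : H (th (nseq k x)) (g x.2.1 ++ nseq k x ++ h x.2.1).
Proof.
elim: k => [|k IH] /=; first by symmetry; apply: pn1_loop.
by rewrite theta_cons IH theta_letter -catA /= pn1_loopK.
Qed.

Lemma theta_epow e n : H (th (epow e n)) (g e.1 ++ epow e n ++ h e.1).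
Proof. by case: n => m; rewrite /epow theta_nseq. Qed.

Lemma powpath_cons (u v : V) s n :
  powpath (vedges u (v :: s)) n = epow (u, v) n ++ powpath (vedges v s) n.
Proof. by []. Qed.

Lemma pn0 x y : pn tp 0 x y = [::].
Proof. by rewrite /pn; elim: (vedges _ _). Qed.

Lemma theta_powpath u s n : path adj u s ->
  H (th (powpath (vedges u s) n)) (g u ++ powpath (vedges u s) (n + 1) ++ h (last u s)).
Proof.
elim: s u => [|v s IH] u /=; first by move=> _; symmetry; apply: pn1_loop.
case/andP=> uv vs_path.
rewrite !powpath_cons theta_cat theta_epow (IH _ vs_path) /= -!catA.
by rewrite (pn1_step _ uv) cat_cons pn1_loopK epow_rcons.
Qed.

Lemma theta_edge u v r :
  H (th ((false, (u, v)) :: r)) (g u ++ (false, (u, v)) :: h u ++ th r).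
Proof. by rewrite theta_cons theta_letter -catA. Qed.

Lemma theta_relator r : relator adj r -> H (th r) [::].
Proof.
case=> [[u [v [uv ->]]] | [a [b [c [[ab bc ca] [->|->]]]]]].
- rewrite !theta_edge /= cats0 (pn1_edgeK _ _ uv) (heq_back _ uv).
  by rewrite -(pn1_step q uv) pn1_loop.
- rewrite !theta_edge /= cats0 (pn1_edgeK _ _ ab) (pn1_edgeK _ _ bc).
  by rewrite (pn1_step _ ca) heq_triangle_squares // pn1_loop.
- have -> : [:: (true, (a, b)); (true, (b, c)); (true, (c, a))] =
     winv [:: (false, (c, a)); (false, (b, c)); (false, (a, b))] by [].
  have cb : adj c b by rewrite adj_sym.
  have ba : adj b a by rewrite adj_sym.
  rewrite theta_winv !theta_edge /= cats0 (pn1_edgeK _ _ cb) (pn1_edgeK _ _ ba).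
  by rewrite (heq_back _ cb) (heq_back _ ba) -(pn1_step q ca) pn1_loop.
Qed.

Lemma theta_heq a b : H a b -> H (th a) (th b).
Proof.
elim=> {a b} [w|w1 w2 _ IH|w1 w2 w3 _ IH1 _ IH2|w1 w2 x|w1 w2 r Hr].
- by [].
- by symmetry.
- by rewrite IH1.
- rewrite !theta_cat theta_cons (theta_cons (linv x)) !theta_letterE.
  by case: x => [[] e] /=; rewrite ?heq_mulKg ?heq_mulKVg.
- by rewrite !theta_cat (theta_relator Hr).
Qed.

Local Instance theta_heq_morph : Proper (H ==> H) th.
Proof. by move=> a b; apply: theta_heq. Qed.

Lemma theta_pn k x y : H (th (pn tp k x y)) (g x ++ pn tp (k + 1) x y ++ h y).
Proof. by rewrite /pn theta_powpath ?tp_last ?tp_path. Qed.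

Lemma theta_pnN1 x y : H (th (pn tp (-1) x y)) (g x ++ h y).
Proof. by rewrite theta_pn addNr pn0. Qed.

Lemma iter_theta a b k j : adj a b ->
  H (iter j th (pn tp k q a ++ epow (a, b) (k + 1) ++ pn tp k b q))
    (pn tp (k + j%:Z) q a ++ epow (a, b) (k + j%:Z + 1) ++ pn tp (k + j%:Z) b q).
Proof.
move=> ab; elim: j => [|j IH]; first by rewrite addr0.
rewrite iterS IH !theta_cat !theta_pn theta_epow !pn_refl /= cats0 -!catA.
rewrite pn1_loopK (pn1_edgeK _ _ ab) epow_rcons.
by have -> : k + j.+1%:Z = k + j%:Z + 1 by lia.
Qed.

Lemma theta_gen_forms a b : adj a b ->
  [/\ H (th (gen (a, b))) (g a ++ gen (a, b) ++ winv (g a)),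
      H (th (gen (a, b))) (g a ++ epow (a, b) 2 ++ h b) &
      H (th (gen (a, b))) (g a ++ epow (a, b) 2 ++ winv (g b))].
Proof. by move=> ab; split; rewrite /gen theta_letter /= -?pn1_winv // (pn1_step q ab). Qed.

Lemma theta_epow_forms a b n : adj a b ->
  [/\ H (th (epow (a, b) n)) (g a ++ epow (a, b) n ++ h a),
      H (th (epow (a, b) n)) (g a ++ epow (a, b) (n + 1) ++ h b) &
      H (th (epow (a, b) n)) (g a ++ epow (a, b) (n + 1) ++ winv (g b))].
Proof.
by move=> ab; split; rewrite theta_epow /= -?pn1_winv // (pn1_step q ab) epow_rcons.
Qed.

Lemma theta_pnN1_gen a b : adj a b ->
  [/\ H (th (pn tp (-1) q a ++ pn tp (-1) b q)) (gen (a, b)),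
      H (th (pn tp (-1) q a ++ gen (a, b) ++ pn tp (-1) a q)) (gen (a, b)) &
      H (th (pn tp (-1) q a ++ gen (a, b) ++ winv (pn tp (-1) q a))) (gen (a, b))].
Proof.
move=> ab; split; rewrite !theta_cat ?theta_winv !theta_pnN1 ?theta_letter !pn_refl /=.
- by rewrite cats0 pn1_edge.
- by rewrite cats0 -!catA cat_cons pn1_loopK pn1_loop.
- by rewrite -pn1_winv -!catA cat_cons pn1_loopK pn1_loop.
Qed.

Lemma theta_pnN1_epow a b n : adj a b ->
  [/\ H (th (pn tp (-1) q a ++ epow (a, b) n ++ pn tp (-1) a q)) (epow (a, b) n),
      H (th (pn tp (-1) q a ++ epow (a, b) (n - 1) ++ pn tp (-1) b q)) (epow (a, b) n) &
      H (th (pn tp (-1) q a ++ epow (a, b) (n - 1) ++ winv (pn tp (-1) q b)))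
        (epow (a, b) n)].
Proof.
move=> ab; split; rewrite !theta_cat ?theta_winv !theta_pnN1 theta_epow !pn_refl /=.
all: rewrite ?cats0 -?pn1_winv -!catA pn1_loopK.
- by rewrite pn1_loop cats0.
- by rewrite (pn1_edge _ ab) epow_rcons subrK cats0.
- by rewrite (pn1_edge _ ab) epow_rcons subrK cats0.
Qed.

Lemma theta_pnN1_powpath u s n : path adj u s ->
  H (th (pn tp (-1) q u ++ powpath (vedges u s) (n - 1) ++ pn tp (-1) (last u s) q))
    (powpath (vedges u s) n).
Proof.
move=> us_path; rewrite !theta_cat !theta_pnN1 theta_powpath // !pn_refl /= cats0.
by rewrite -!catA pn1_loopK pn1_loop cats0 subrK.
Qed.

Lemma theta_pow_gen a b k : adj a b ->
  theta_pow_eq adj tp q k (gen (a, b)) (pn tp k q a ++ epow (a, b) (k + 1) ++ pn tp k b q).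
Proof.
move=> ab; case: k => m.
- by have := iter_theta 0 m ab; rewrite add0r !pn0.
- have := iter_theta (Negz m) m.+1 ab.
  have -> : Negz m + m.+1%:Z = 0 by rewrite NegzE; lia.
  by rewrite !pn0.
Qed.

End BestvinaBradyTheta.

Theorem lemma4p1 (V : finType) (adj : rel V) (q : V) (t : rel V)
    (tp : V -> V -> seq V) :
  symmetric adj -> irreflexive adj -> simply_connected adj ->
  spanning_tree adj t -> tree_path_fun t tp ->
  forall (e : V * V) (n : int), adj e.1 e.2 ->
  let H := heq adj in
  let th := theta tp q in
  let P := pn tp 1 in
  let Pm := pn tp (-1) in
  let thinv := theta_pow_eq adj tp q (-1) in
  (* (i) *)
  [/\ H (th (gen e)) (P q e.1 ++ gen e ++ winv (P q e.1)),
      H (th (gen e)) (P q e.1 ++ epow e 2 ++ P e.2 q) &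
      H (th (gen e)) (P q e.1 ++ epow e 2 ++ winv (P q e.2))] /\
  (* (ii) *)
  [/\ H (th (epow e n)) (P q e.1 ++ epow e n ++ P e.1 q),
      H (th (epow e n)) (P q e.1 ++ epow e (n + 1) ++ P e.2 q) &
      H (th (epow e n)) (P q e.1 ++ epow e (n + 1) ++ winv (P q e.2))] /\
  (* (iii) *)
  (forall (u : V) (s : seq V), s != [::] -> path adj u s ->
     H (th (powpath (vedges u s) n))
       (P q u ++ powpath (vedges u s) (n + 1) ++ P (last u s) q)) /\
  (* (iv) *)
  [/\ thinv (gen e) (Pm q e.1 ++ Pm e.2 q),
      thinv (gen e) (Pm q e.1 ++ gen e ++ Pm e.1 q) &
      thinv (gen e) (Pm q e.1 ++ gen e ++ winv (Pm q e.1))] /\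
  (* (v) *)
  [/\ thinv (epow e n) (Pm q e.1 ++ epow e n ++ Pm e.1 q),
      thinv (epow e n) (Pm q e.1 ++ epow e (n - 1) ++ Pm e.2 q) &
      thinv (epow e n) (Pm q e.1 ++ epow e (n - 1) ++ winv (Pm q e.2))] /\
  (* (vi) *)
  (forall (u : V) (s : seq V), s != [::] -> path adj u s ->
     thinv (powpath (vedges u s) n)
       (Pm q u ++ powpath (vedges u s) (n - 1) ++ Pm (last u s) q)) /\
  (* (vii) *)
  (forall k : int,
     theta_pow_eq adj tp q k (gen e) (pn tp k q e.1 ++ epow e (k + 1) ++ pn tp k e.2 q)).
Proof.
move=> adj_sym _ [_ loops] [_ t_sub _ _] tpP [a b] n ab H th P Pm thinv.
refine (conj _ (conj _ (conj _ (conj _ (conj _ (conj _ _)))))).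
- exact (theta_gen_forms adj_sym loops t_sub tpP q ab).
- exact (theta_epow_forms adj_sym loops t_sub tpP q n ab).
- move=> u s _ us; exact (theta_powpath adj_sym loops t_sub tpP q n us).
- exact (theta_pnN1_gen adj_sym loops t_sub tpP q ab).
- exact (theta_pnN1_epow adj_sym loops t_sub tpP q n ab).
- move=> u s _ us; exact (theta_pnN1_powpath adj_sym loops t_sub tpP q n us).
- move=> k; exact (theta_pow_gen adj_sym loops t_sub tpP q k ab).
Qed.
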